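(* Let $\mathcal G$ be a second countable ample groupoid whose unit space $\mathcal G^{(0)}$ is Hausdorff, let $\ell$ be a field, and let $\nu:\mathcal G^{(2)}\to\mathcal U(\ell)$ be a normalized continuous $2$-cocycle. Assume that $\mathcal G$ is effective, that for every nonzero $f\in\mathcal A(\mathcal G,\nu)$ the support $\operatorname{supp}(f)=\{\xi:f(\xi)\neq0\}$ has nonempty interior, and that $\mathcal G$ is minimal. Then $\mathcal A(\mathcal G,\nu)$ is simple.
   Context: An ample groupoid is an étale topological groupoid (possibly non-Hausdorff) whose topology has a basis of compact open slices, where a slice is an open set on which the domain map $d$ and the range map are injective. $\mathcal G$ is effective if the interior of its isotropy is $\mathcal G^{(0)}$, and minimal if every orbit in $\mathcal G^{(0)}$ is dense. A continuous $2$-cocycle is a locally constant map $\nu:\mathcal G^{(2)}\to\mathcal U(\ell)$ (with $\mathcal U(\ell)$ discrete) satisfying $\nu(\xi_1,\xi_2)\nu(\xi_1\xi_2,\xi_3)=\nu(\xi_1,\xi_2\xi_3)\nu(\xi_2,\xi_3)$; it is normalized if $\nu(\xi,d(\xi))=\nu(d(\xi^{-1}),\xi)=1$ for all $\xi$. The twisted Steinberg algebra $\mathcal A(\mathcal G,\nu)$ is the $\ell$-module spanned by the functions $\mathcal G\to\ell$ which are continuous (for discrete $\ell$) and compactly supported on some Hausdorff open subset and zero outside it (equivalently, the span of characteristic functions of compact open slices), with product $(f\star_\nu g)(\xi)=\sum_{\xi=\xi_1\xi_2}\nu(\xi_1,\xi_2)f(\xi_1)g(\xi_2)$. *)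

From HB Require Import structures.
From mathcomp Require Import all_boot all_order all_algebra.
From mathcomp Require Import boolp classical_sets functions cardinality fsbigop.
From mathcomp Require Import topology numfun.
Set Implicit Arguments. Unset Strict Implicit. Unset Printing Implicit Defensive.
Import Order.TTheory GRing.Theory.
Local Open Scope classical_set_scope.
Local Open Scope ring_scope.

(* Structure maps of a groupoid whose elements form the type T; units are   *)
(* elements of T.  gdom = d (domain/source), gran = r (range).              *)
Record groupoid_ops (T : Type) := GroupoidOps {
  gdom : T -> T; gran : T -> T; ginv : T -> T; gmul : T -> T -> T }.

Section Groupoids.
Variable T : topologicalType.
Variable g : groupoid_ops T.

Definition composable (p : T * T) : Prop := gdom g p.1 = gran g p.2.
Definition G2 : set (T * T) := [set p | composable p].

Definition units : set T := [set x | gdom g x = x].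

Definition is_groupoid : Prop :=
  [/\ (forall x, gdom g (gdom g x) = gdom g x /\ gran g (gdom g x) = gdom g x),
      (forall x, gdom g (gran g x) = gran g x /\ gran g (gran g x) = gran g x),
      (forall x y, gdom g x = gran g y ->
          gdom g (gmul g x y) = gdom g y /\ gran g (gmul g x y) = gran g x),
      (forall x y z, gdom g x = gran g y -> gdom g y = gran g z ->
          gmul g (gmul g x y) z = gmul g x (gmul g y z)) &
      (forall x, gmul g (gran g x) x = x /\ gmul g x (gdom g x) = x) /\
      (forall x, gdom g (ginv g x) = gran g x /\ gran g (ginv g x) = gdom g x /\
          gmul g x (ginv g x) = gran g x /\ gmul g (ginv g x) x = gdom g x)].

Definition is_topological_groupoid : Prop :=
  [/\ is_groupoid,
      {within G2, continuous (fun p : T * T => gmul g p.1 p.2)},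
      continuous (ginv g), continuous (gdom g) & continuous (gran g)].

Definition rel_open (A U : set T) : Prop := exists W, open W /\ U = W `&` A.

(* d : G -> G^(0) is a local homeomorphism *)
Definition etale : Prop :=
  is_topological_groupoid /\
  forall x, exists U, [/\ open U, U x,
     (forall y z, U y -> U z -> gdom g y = gdom g z -> y = z) &
     (forall V, open V -> V `<=` U -> rel_open units (gdom g @` V))].

Definition slice (U : set T) : Prop :=
  [/\ open U,
      (forall y z, U y -> U z -> gdom g y = gdom g z -> y = z) &
      (forall y z, U y -> U z -> gran g y = gran g z -> y = z)].

Definition compact_open_slice (U : set T) : Prop := compact U /\ slice U.

Definition ample : Prop :=
  etale /\ forall x W, open W -> W x ->
    exists U, [/\ compact_open_slice U, U x & U `<=` W].

Definition units_hausdorff : Prop :=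
  forall x y, units x -> units y -> x <> y ->
    exists A B, [/\ open A, open B, A x, B y & A `&` B `&` units = set0].

Definition isotropy : set T := [set x | gdom g x = gran g x].

Definition effective : Prop := interior isotropy = units.

Definition orbit (u : T) : set T := [set gran g x | x in [set x | gdom g x = u]].

Definition minimal : Prop :=
  forall u, units u -> forall v W, units v -> open W -> W v ->
    exists w, [/\ W w, units w & orbit u w].

Variable K : fieldType.

(* normalized continuous 2-cocycle with values in the units of K (discrete) *)
Definition normalized_cocycle (nu : T * T -> K) : Prop :=
  [/\ (forall p, G2 p -> nu p != 0),
      (forall p, G2 p -> exists W, [/\ open W, W p &
           forall q, W q -> G2 q -> nu q = nu p]),
      (forall x y z, gdom g x = gran g y -> gdom g y = gran g z ->
          nu (x, y) * nu (gmul g x y, z) = nu (x, gmul g y z) * nu (y, z)) &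
      (forall x, nu (x, gdom g x) = 1 /\ nu (gdom g (ginv g x), x) = 1)].

Definition steinberg : set (T -> K) :=
  [set f | exists s : seq (K * set T),
     (forall p, p \in s -> compact_open_slice p.2) /\
     f = fun x => \sum_(p <- s) p.1 * \1_(p.2) x].

(* twisted convolution: (f * h)(xi) = sum_{xi = a b} nu(a,b) f(a) h(b),    *)
(* parametrized by a with r(a) = r(xi), b = a^-1 xi.                       *)
Definition conv (nu : T * T -> K) (f h : T -> K) : T -> K :=
  fun xi => \sum_(a \in [set a | gran g a = gran g xi])
     nu (a, gmul g (ginv g a) xi) * f a * h (gmul g (ginv g a) xi).

Definition ideal (nu : T * T -> K) (I : set (T -> K)) : Prop :=
  [/\ I `<=` steinberg, I (fun _ => 0),
      (forall f h, I f -> I h -> I (fun x => f x - h x)) &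
      (forall f h, I f -> steinberg h -> I (conv nu f h) /\ I (conv nu h f))].

Definition simple_algebra (nu : T * T -> K) : Prop :=
  forall I, ideal nu I -> I = [set fun _ => 0] \/ I = steinberg.

End Groupoids.

From HB Require Import structures.
From mathcomp Require Import all_boot all_order all_algebra.
From mathcomp Require Import boolp classical_sets functions cardinality fsbigop.
From mathcomp Require Import topology numfun.
Local Open Scope classical_set_scope.
Local Open Scope ring_scope.
Import GRing.Theory.
Set Implicit Arguments. Unset Strict Implicit.

(* The support of a nonzero element of I has
   interior, so convolving it on the left with the indicator of the inverse of
   a compact open slice B inside that interior gives an element of I that does
   not vanish on the open set of units d(B).  Effectiveness and Hausdorffness of
   the unit space let us shrink d(B) to an open W over which every slice in the
   element either is the unit space or is empty; the element is then a nonzero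
   constant times the indicator of the units there, and cutting it down by a
   compact open V inside W puts 1_V in I.  Translating V by slices, minimality
   shows that every unit has an open neighbourhood whose indicator lies in I;
   covering the compact set r(B) by finitely many of them puts every k 1_B, hence
   all of A(G, nu), in I. *)

Lemma fsbig_supp1 (R : Type) (idx : R) (op : Monoid.com_law idx) (I : choiceType)
    (A : set I) (F : I -> R) a0 :
  A a0 -> (forall a, A a -> a <> a0 -> F a = idx) ->
  \big[op/idx]_(a \in A) F a = F a0.
Proof.
move=> Aa0 F0; rewrite -(fsbig_widen [set a0] A F) ?fsbig_set1 //.
  by move=> _ ->.
by move=> a [Aa /= a_neq]; apply: F0.
Qed.

Lemma indic_mem (T : Type) {R : pzRingType} (A : set T) x : A x -> \1_A x = 1 :> R.
Proof. by move=> Ax; rewrite indicE mem_set. Qed.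

Lemma indic_nmem (T : Type) {R : pzRingType} (A : set T) x : ~ A x -> \1_A x = 0 :> R.
Proof. by move=> Ax; rewrite indicE memNset. Qed.

Lemma indic_support (T : Type) {R : pzRingType} (A : set T) :
  [set x | \1_A x != 0 :> R] `<=` A.
Proof. by move=> x /=; apply: contraNP => nAx; rewrite indic_nmem. Qed.

Lemma scaled_indic_support (T : Type) {R : pzRingType} (k : R) (A : set T) :
  [set x | k * \1_A x != 0] `<=` A.
Proof. by move=> x /=; apply: contraNP => nAx; rewrite indic_nmem ?mulr0. Qed.

(* [compact_cover] is only stated for pointed spaces; a point of [A] makes the
   ambient space one. *)
Definition pointed_at (T : topologicalType) (x : T) : Type := T.
HB.instance Definition _ (T : topologicalType) (x : T) :=
  Choice.copy (pointed_at x) T.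
HB.instance Definition _ (T : topologicalType) (x : T) :=
  isPointed.Build (pointed_at x) x.
HB.instance Definition _ (T : topologicalType) (x : T) :=
  Topological.copy (pointed_at x) T.

Lemma compact_cover_compact (T : topologicalType) (A : set T) :
  compact A -> cover_compact A.
Proof.
have [->|/set0P[x _]] := eqVneq A set0; first by move=> _ I D F _ _; exists finmap.fset0.
by move=> cA; have : @cover_compact (pointed_at x) A by rewrite -compact_cover.
Qed.

Section Groupoid.
Variables (T : topologicalType) (g : groupoid_ops T).
Hypothesis gG : is_groupoid g.
Local Notation d := (gdom g).
Local Notation r := (gran g).
Local Notation i := (ginv g).
Local Notation m := (gmul g).

Lemma gdom_dom x : d (d x) = d x. Proof. by case: gG => H _ _ _ _; case: (H x). Qed.
Lemma gran_dom x : r (d x) = d x. Proof. by case: gG => H _ _ _ _; case: (H x). Qed.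
Lemma gdom_ran x : d (r x) = r x. Proof. by case: gG => _ H _ _ _; case: (H x). Qed.
Lemma gran_ran x : r (r x) = r x. Proof. by case: gG => _ H _ _ _; case: (H x). Qed.

Lemma gran_mul x y : d x = r y -> r (m x y) = r x.
Proof. by case: gG => _ _ H _ _ /H []. Qed.
Lemma gmulA x y z : d x = r y -> d y = r z -> m (m x y) z = m x (m y z).
Proof. by case: gG => _ _ _ H _; apply: H. Qed.

Lemma gmul_ranx x : m (r x) x = x. Proof. by case: gG => _ _ _ _ [H _]; case: (H x). Qed.
Lemma gmulx_dom x : m x (d x) = x. Proof. by case: gG => _ _ _ _ [H _]; case: (H x). Qed.
Lemma gdom_inv x : d (i x) = r x. Proof. by case: gG => _ _ _ _ [_ H]; case: (H x). Qed.
Lemma gran_inv x : r (i x) = d x. Proof. by case: gG => _ _ _ _ [_ H]; case: (H x) => _ []. Qed.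
Lemma gmulxV x : m x (i x) = r x. Proof. by case: gG => _ _ _ _ [_ H]; case: (H x) => _ [_ []]. Qed.
Lemma gmulVx x : m (i x) x = d x. Proof. by case: gG => _ _ _ _ [_ H]; case: (H x) => _ [_ []]. Qed.

Lemma units_dom x : units g (d x). Proof. exact: gdom_dom. Qed.
Lemma units_ran x : units g (r x). Proof. exact: gdom_ran. Qed.

Lemma unit_ran u : units g u -> r u = u.
Proof. by rewrite /units /= => <-; rewrite gran_dom. Qed.

Lemma unit_inv u : units g u -> i u = u.
Proof.
by move=> uu; rewrite -[i u]gmul_ranx gran_inv uu gmulxV unit_ran.
Qed.

Lemma ginvK x : i (i x) = x.
Proof.
have dVV : d (i (i x)) = d x by rewrite gdom_inv gran_inv.
rewrite -[LHS]gmulx_dom dVV -gmulVx -gmulA ?gdom_inv //.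
by rewrite gmulVx gdom_inv gmul_ranx.
Qed.

Lemma ginv_image A : i @` A = i @^-1` A.
Proof.
apply/seteqP; split=> [_ [y Ay <-]|x Aix]; first by rewrite /preimage /= ginvK.
by exists (i x); rewrite ?ginvK.
Qed.

Lemma gmulx_eq_dom y z : d y = r z -> m y z = y -> z = d y.
Proof.
move=> yz yzy; have -> : z = m (m (i y) y) z by rewrite gmulVx yz gmul_ranx.
by rewrite gmulA ?gdom_inv // yzy gmulVx.
Qed.

Lemma unit_divl_eq a z : r a = r z -> units g (m (i a) z) -> a = z.
Proof.
move=> az u; have aVz : d (i a) = r z by rewrite gdom_inv.
have aVz_dom : m (i a) z = d a by rewrite -(unit_ran u) gran_mul ?gran_inv.
by rewrite -{1}[a]gmulx_dom -aVz_dom -gmulA ?gran_inv // gmulxV az gmul_ranx.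
Qed.

Variables (K : fieldType) (nu : T * T -> K).
Local Notation conv := (conv g nu).

Lemma conv_unitl (phi f : T -> K) :
  (forall x, nu (r x, x) = 1) -> [set x | phi x != 0] `<=` units g ->
  forall xi, conv phi f xi = phi (r xi) * f xi.
Proof.
move=> nu_rx phi_units xi; rewrite /conv (fsbig_supp1 _ (a0 := r xi)) /=.
- by rewrite unit_inv ?gmul_ranx ?nu_rx ?mul1r //; apply: units_ran.
- exact: gran_ran.
move=> a ra a_neq; have [->|/phi_units ua] := eqVneq (phi a) 0.
  by rewrite mulr0 mul0r.
by case: a_neq; rewrite -ra unit_ran.
Qed.

Lemma conv_unitr (f phi : T -> K) :
  (forall x, nu (x, d x) = 1) -> [set x | phi x != 0] `<=` units g ->
  forall xi, conv f phi xi = f xi * phi (d xi).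
Proof.
move=> nu_xd phi_units xi; rewrite /conv (fsbig_supp1 _ (a0 := xi)) //=.
  by rewrite gmulVx nu_xd mul1r.
move=> a ra a_neq; have [->|/phi_units u] := eqVneq (phi (m (i a) xi)) 0.
  by rewrite mulr0.
by case: a_neq; apply: unit_divl_eq.
Qed.

Lemma conv_indic_inv_dom (B : set T) (k : K) (h : T -> K) b :
  slice g B -> B b ->
  conv (fun a => k * \1_(i @^-1` B) a) h (d b) = nu (i b, b) * k * h b.
Proof.
move=> [_ Bd _] Bb; rewrite /conv (fsbig_supp1 _ (a0 := i b)) /=.
- by rewrite ginvK gmulx_dom indic_mem ?mulr1 //= ginvK.
- by rewrite gran_inv gran_dom.
move=> a ra a_neq; have [Bia|Bia] := pselect (B (i a)).
  by case: a_neq; rewrite -(Bd _ _ Bia Bb) ?ginvK // gdom_inv ra gran_dom.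
by rewrite indic_nmem // !mulr0 mul0r.
Qed.

Lemma conv_indic_inv_out (B : set T) (k : K) (h : T -> K) xi :
  slice g B -> [set x | h x != 0] `<=` B -> ~ (d @` B) xi ->
  conv (fun a => k * \1_(i @^-1` B) a) h xi = 0.
Proof.
move=> [_ _ Br] hB xi_dB; rewrite /conv fsbig1 // => a ra.
have [Bia|Bia] := pselect (B (i a)); last by rewrite indic_nmem // !mulr0 mul0r.
have [->|/hB Bia_xi] := eqVneq (h (m (i a) xi)) 0; first by rewrite mulr0.
have aV_xi : d (i a) = r xi by rewrite gdom_inv.
have fix_ia : m (i a) xi = i a by apply: Br; rewrite // gran_mul.
by case: xi_dB; exists (i a); rewrite // -(gmulx_eq_dom aV_xi fix_ia).
Qed.

End Groupoid.

Section Ample.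
Variables (T : topologicalType) (g : groupoid_ops T).
Local Notation d := (gdom g).
Local Notation r := (gran g).
Local Notation i := (ginv g).

Lemma ample_groupoid : ample g -> is_groupoid g.
Proof. by case=> [[[]]]. Qed.

Lemma ample_continuous_inv : ample g -> continuous i.
Proof. by case=> [[[]]]. Qed.

Lemma ample_continuous_dom : ample g -> continuous d.
Proof. by case=> [[[]]]. Qed.

Lemma ample_continuous_ran : ample g -> continuous r.
Proof. by case=> [[[]]]. Qed.

Lemma effective_open_units : effective g -> open (units g).
Proof. by rewrite /effective => <-; apply: open_interior. Qed.

Lemma effective_open_dom_image V : etale g -> effective g -> open V -> open (d @` V).
Proof.
move=> [_ loc_homeo] geff oV; rewrite openE => _ [x Vx <-].
have [U [oU Ux _ dU_open]] := loc_homeo x.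
have [W [oW dVU]] := dU_open (V `&` U) (openI oV oU) (@subIsetr _ _ _).
have oWu : open (W `&` units g) := openI oW (effective_open_units geff).
have Wdx : (W `&` units g) (d x) by rewrite -dVU; exists x.
apply: filterS (open_nbhs_nbhs (conj oWu Wdx)) => y.
by rewrite -dVU => -[z [Vz _] <-]; exists z.
Qed.

Lemma compact_open_slice_inv B : ample g ->
  compact_open_slice g B -> compact_open_slice g (i @^-1` B).
Proof.
move=> ga [cB [oB Bd Br]]; have gG := ample_groupoid ga.
have /continuousP ci := ample_continuous_inv ga.
split.
  rewrite -ginv_image //; apply: continuous_compact => //.
  exact/continuous_subspaceT/ample_continuous_inv.
split; first exact: ci.
- move=> y z By Bz ryz; rewrite -[y](ginvK gG) -[z](ginvK gG); congr i.
  by apply: Br => //; rewrite !(gran_inv gG).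
- move=> y z By Bz dyz; rewrite -[y](ginvK gG) -[z](ginvK gG); congr i.
  by apply: Bd => //; rewrite !(gdom_inv gG).
Qed.

End Ample.

Lemma steinberg_scaled_indic (T : topologicalType) (g : groupoid_ops T)
    {K : fieldType} B (k : K) :
  compact_open_slice g B -> steinberg g (fun x => k * \1_B x).
Proof.
move=> cB; exists [:: (k, B)]; split; first by move=> p; rewrite inE => /eqP ->.
by apply: funext => x; rewrite big_seq1.
Qed.

Lemma steinberg_indic (T : topologicalType) (g : groupoid_ops T) {K : fieldType} B :
  compact_open_slice g B -> steinberg g (\1_B : T -> K).
Proof.
have -> : \1_B = (fun x => 1 * \1_B x) :> (T -> K).
  by apply: funext => x; rewrite mul1r.
exact: steinberg_scaled_indic.
Qed.

Section Localization.
Variables (T : topologicalType) (g : groupoid_ops T).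
Local Notation d := (gdom g).
Local Notation r := (gran g).

Definition units_or_empty_over (W U : set T) : Prop :=
  (forall xi, W (r xi) -> W (d xi) -> U xi <-> units g xi) \/
  (forall xi, W (r xi) -> W (d xi) -> ~ U xi).

Lemma units_or_empty_overS W W' U :
  W' `<=` W -> units_or_empty_over W U -> units_or_empty_over W' U.
Proof. by move=> W'W [UW|UW]; [left|right] => xi /W'W Wr /W'W; apply: UW. Qed.

Lemma sum_indic_over (K : pzRingType) (s : seq (K * set T)) W u :
  is_groupoid g -> (forall p, p \in s -> units_or_empty_over W p.2) ->
  W `<=` units g -> W u -> forall xi, W (r xi) -> W (d xi) ->
  \sum_(p <- s) p.1 * \1_(p.2) xi =
    (\sum_(p <- s) p.1 * \1_(p.2) u) * \1_(units g) xi.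
Proof.
move=> gG s_over Wu Wu0 xi Wr Wd; have uu := Wu _ Wu0.
have Wru : W (r u) by rewrite unit_ran.
have Wdu : W (d u) by rewrite uu.
rewrite big_distrl /=; apply: eq_big_seq => p /s_over [p_units|p_empty].
  have pu : p.2 u by apply/(p_units _ Wru Wdu).
  have [uxi|nuxi] := pselect (units g xi).
    by rewrite !indic_mem ?mulr1 //; apply/(p_units _ Wr Wd).
  rewrite [\1_(units g) xi]indic_nmem // mulr0 indic_nmem ?mulr0 //.
  by move/(p_units _ Wr Wd).
rewrite (indic_nmem (p_empty _ Wr Wd)) (indic_nmem (p_empty _ Wru Wdu)).
by rewrite !(mulr0, mul0r).
Qed.

Hypotheses (ga : ample g) (geff : effective g) (gH : units_hausdorff g).
Let gG := ample_groupoid ga.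

Lemma empty_over_nonisotropic U W z : slice g U -> open W ->
  W `<=` units g -> U z -> W (r z) -> W (d z) -> d z <> r z ->
  exists W', [/\ open W', W' !=set0, W' `<=` W &
    forall xi, W' (r xi) -> W' (d xi) -> ~ U xi].
Proof.
move=> [oU Ud _] oW Wu Uz Wrz Wdz dz_rz.
have [A [B [oA oB Arz Bdz AB]]] :=
  gH (units_ran gG z) (units_dom gG z) (nesym dz_rz).
set V := U `&` r @^-1` A.
have /continuousP open_ran := ample_continuous_ran ga.
have oV : open V := openI oU (open_ran _ oA).
exists (W `&` B `&` d @` V); split.
- by apply: openI (openI oW oB) (effective_open_dom_image ga.1 geff oV).
- by exists (d z); split; [split|exists z].
- by move=> x [[]].
(* An arrow of U over W' has the source of some y in U with r y in A, so it is
   y, and its range would lie in A, B and the unit space at once. *)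
move=> xi [[Wr Br] _] [_ [y [Uy Ary] dy_dxi]] Uxi.
have yxi : y = xi := Ud _ _ Uy Uxi dy_dxi.
suff : (A `&` B `&` units g) (r xi) by rewrite AB.
by split; [split; rewrite // -yxi|apply: Wu].
Qed.

Lemma localize_slice U W : slice g U -> open W -> W `<=` units g -> W !=set0 ->
  exists W', [/\ open W', W' !=set0, W' `<=` W & units_or_empty_over W' U].
Proof.
move=> sU oW Wu W0; have [oU Ud _] := sU.
have [[z [[[Uz Wdz] Wrz] dz_rz]]|isotropic] :=
  pselect (exists z, (U `&` d @^-1` W `&` r @^-1` W) z /\ d z <> r z).
  have [W' [oW' W'0 W'W W'U]] :=
    empty_over_nonisotropic sU oW Wu Uz Wrz Wdz dz_rz.
  by exists W'; split => //; right.
set O := U `&` d @^-1` W `&` r @^-1` W.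
have /continuousP open_dom := ample_continuous_dom ga.
have /continuousP open_ran := ample_continuous_ran ga.
have oO : open O := openI (openI oU (open_dom _ oW)) (open_ran _ oW).
have Ou : O `<=` units g.
  rewrite -geff -open_subsetE //.
  by move=> x Ox; apply: contrapT => dx_rx; apply: isotropic; exists x.
have [O0|/set0P/negP/negbNE/eqP O0] := pselect (O !=set0).
  exists O; split => //.
    by move=> x Ox; rewrite -(Ou _ Ox); case: Ox => -[].
  left=> xi Or Od; split=> [Uxi|uxi].
    apply: Ou; split; [split|] => //.
      by case: Od => -[_]; rewrite /preimage /= gdom_dom.
    by case: Or => -[_]; rewrite /preimage /= gdom_ran.
  by rewrite -uxi; case: Od => -[].
exists W; split => //; right=> xi Wr Wd Uxi.
have Oxi : O xi by split.
by rewrite O0 in Oxi.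
Qed.

Lemma localize_slices (s : seq (set T)) W :
  (forall U, U \in s -> slice g U) -> open W -> W `<=` units g -> W !=set0 ->
  exists W', [/\ open W', W' !=set0, W' `<=` W &
    forall U, U \in s -> units_or_empty_over W' U].
Proof.
elim: s W => [|U s IH] W s_slices oW Wu W0.
  by exists W; split => // U; rewrite in_nil.
have [W1 [oW1 W10 W1W s_over]] : exists W1, [/\ open W1, W1 !=set0, W1 `<=` W &
    forall V, V \in s -> units_or_empty_over W1 V].
  by apply: IH => // V Vs; apply: s_slices; rewrite in_cons Vs orbT.
have [W2 [oW2 W20 W2W1 U_over]] :=
  localize_slice (s_slices U (mem_head U s)) oW1 (subset_trans W1W Wu) W10.
exists W2; split => //; first exact: subset_trans W2W1 W1W.
move=> V; rewrite in_cons => /orP [/eqP ->//|Vs].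
exact: units_or_empty_overS W2W1 (s_over V Vs).
Qed.

End Localization.

Section Ideal.
Variables (T : topologicalType) (g : groupoid_ops T) (K : fieldType).
Variables (nu : T * T -> K) (I : set (T -> K)).
Hypothesis gI : ideal g nu I.
Local Notation conv := (conv g nu).

Lemma ideal_steinberg : I `<=` @steinberg _ g K. Proof. by case: gI. Qed.
Lemma ideal0 : I (fun=> 0). Proof. by case: gI. Qed.
Lemma idealB f h : I f -> I h -> I (fun x => f x - h x).
Proof. by case: gI => _ _ + _; apply. Qed.
Lemma ideal_convr f h : I f -> steinberg g h -> I (conv f h).
Proof. by case: gI => _ _ _ /[apply] /[apply] -[]. Qed.
Lemma ideal_convl f h : I f -> steinberg g h -> I (conv h f).
Proof. by case: gI => _ _ _ /[apply] /[apply] -[]. Qed.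

Lemma ideal_eq_steinberg :
  (forall B (k : K), compact_open_slice g B -> I (fun x => k * \1_B x)) ->
  I = @steinberg _ g K.
Proof.
move=> I_indic; apply/seteqP; split; first exact: ideal_steinberg.
move=> _ [s [s_slices ->]]; elim: s s_slices => [|p s IH] s_slices.
  by under eq_fun do rewrite big_nil; apply: ideal0.
have Ip := I_indic _ p.1 (s_slices p (mem_head p s)).
have Is : I (fun x => \sum_(q <- s) q.1 * \1_(q.2) x).
  by apply: IH => q qs; apply: s_slices; rewrite in_cons qs orbT.
have := idealB Ip (idealB ideal0 Is).
by congr I; apply: funext => x; rewrite big_cons sub0r opprK.
Qed.

End Ideal.

Section Simplicity.
Variables (T : topologicalType) (g : groupoid_ops T) (K : fieldType).
Variables (nu : T * T -> K) (I : set (T -> K)).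
Local Notation d := (gdom g).
Local Notation r := (gran g).
Local Notation i := (ginv g).
Local Notation conv := (conv g nu).

Definition ideal_unit_set (W : set T) : Prop := W `<=` units g /\ I \1_W.

Hypotheses (ga : ample g) (geff : effective g) (gnu : normalized_cocycle g nu).
Hypothesis gI : ideal g nu I.
Let gG := ample_groupoid ga.

Let nu_ranx x : nu (r x, x) = 1.
Proof. by case: gnu => _ _ _ /(_ x) [_]; rewrite gdom_inv. Qed.

Let nu_xdom x : nu (x, d x) = 1.
Proof. by case: gnu => _ _ _ /(_ x) []. Qed.

Lemma conv_indic_sandwich V h c : V `<=` units g -> c != 0 ->
  (forall xi, V (r xi) -> V (d xi) -> h xi = c * \1_(units g) xi) ->
  conv (fun x => c^-1 * \1_V x) (conv h \1_V) = \1_V.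
Proof.
move=> Vu c_neq0 h_red; apply: funext => xi.
rewrite conv_unitl //; last exact: subset_trans (scaled_indic_support (A := _)) Vu.
rewrite conv_unitr //; last exact: subset_trans (indic_support (A := _)) Vu.
have [[Vr Vd]|nV] := pselect (V (r xi) /\ V (d xi)).
  rewrite (h_red xi Vr Vd) (indic_mem Vr) (indic_mem Vd) !mulr1 mulrA mulVf // mul1r.
  have [uxi|nuxi] := pselect (units g xi); last by rewrite !indic_nmem // => /Vu.
  by rewrite !indic_mem // -uxi.
have nVxi : ~ V xi.
  by move=> Vxi; apply: nV; have uxi := Vu _ Vxi; rewrite unit_ran // uxi.
rewrite (indic_nmem nVxi).
have [Vr|nVr] := pselect (V (r xi)); last by rewrite (indic_nmem nVr) !(mulr0, mul0r).
have [Vd|nVd] := pselect (V (d xi)); last by rewrite (indic_nmem nVd) !(mulr0, mul0r).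
by case: nV.
Qed.

Lemma ideal_unit_set0 : ideal_unit_set set0.
Proof. by split => //; rewrite indic0; apply: ideal0 gI. Qed.

Lemma ideal_unit_setU W1 W2 :
  ideal_unit_set W1 -> ideal_unit_set W2 -> ideal_unit_set (W1 `|` W2).
Proof.
move=> [W1u IW1] [W2u IW2]; split; first by move=> x [/W1u|/W2u].
have IW12 := ideal_convr gI IW1 (ideal_steinberg gI IW2).
have := idealB gI IW1 (idealB gI IW12 IW2); congr I; apply: funext => x.
rewrite conv_unitl //; last exact: subset_trans (indic_support (A := _)) W1u.
have [W2x|nW2x] := pselect (W2 x).
  rewrite (unit_ran gG (W2u _ W2x)) (indic_mem W2x) mulr1 opprB addrC subrK.
  by rewrite indic_mem //; right.
rewrite (indic_nmem nW2x) mulr0 subrr subr0.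
have [W1x|nW1x] := pselect (W1 x); first by rewrite !indic_mem //; left.
by rewrite !indic_nmem // => -[].
Qed.

Lemma ideal_scaled_indic_ran W B k : ideal_unit_set W ->
  compact_open_slice g B -> r @` B `<=` W -> I (fun x => k * \1_B x).
Proof.
move=> [Wu IW] cB rBW.
have := ideal_convr gI IW (steinberg_scaled_indic k cB); congr I; apply: funext => x.
rewrite conv_unitl //; last exact: subset_trans (indic_support (A := _)) Wu.
have [Bx|nBx] := pselect (B x); last by rewrite (indic_nmem nBx) !mulr0.
by rewrite !indic_mem ?mul1r //; apply: rBW; exists x.
Qed.

Lemma ideal_unit_set_dom B x : compact_open_slice g B -> I \1_B -> B x ->
  (forall b, B b -> nu (i b, b) = nu (i x, x)) -> ideal_unit_set (d @` B).
Proof.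
move=> cB IB Bx nu_cst; have [_ sB] := cB.
split; first by move=> _ [b _ <-]; apply: units_dom.
set k := (nu (i x, x))^-1.
have := ideal_convl gI IB (steinberg_scaled_indic k (compact_open_slice_inv ga cB)).
congr I; apply: funext => y.
have [[b Bb <-]|ndBy] := pselect ((d @` B) y); last first.
  rewrite (indic_nmem ndBy) conv_indic_inv_out //.
  exact: indic_support.
rewrite conv_indic_inv_dom // (indic_mem Bb) mulr1 nu_cst // mulfV.
  by rewrite indic_mem //; exists b.
by case: gnu => nu_neq0 _ _ _; apply: nu_neq0; rewrite /G2 /composable /= gdom_inv.
Qed.

Hypothesis gmin : minimal g.

Lemma ideal_unit_set_translate W v : ideal_unit_set W -> open W -> W !=set0 ->
  units g v -> exists D, [/\ open D, D v & ideal_unit_set D].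
Proof.
move=> IW oW [w Ww] uv; have [Wu _] := IW.
have [y [Wy _ [x dxv rxy]]] := gmin uv (Wu _ Ww) oW Ww.
have [nu_neq0 nu_loc_cst _ _] := gnu.
have G2_inv b : G2 g (i b, b) by rewrite /G2 /composable /= gdom_inv.
have [N [oN Nx nu_N]] := nu_loc_cst _ (G2_inv x).
have /continuousP open_inv_id : continuous (fun b => (i b, b)).
  by move=> b; apply: cvg_pair; [apply: ample_continuous_inv|apply: cvg_id].
have /continuousP open_ran := ample_continuous_ran ga.
set O := (fun b => (i b, b)) @^-1` N `&` r @^-1` W.
have oO : open O := openI (open_inv_id _ oN) (open_ran _ oW).
have [B [cB Bx BO]] : exists B, [/\ compact_open_slice g B, B x & B `<=` O].
  by apply: ga.2 oO _; split => //=; rewrite rxy.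
have [_ [oB _ _]] := cB.
have IB : I \1_B.
  have rBW : r @` B `<=` W by move=> _ [b /BO [_ Wrb] <-].
  have := ideal_scaled_indic_ran 1 IW cB rBW.
  by congr I; apply: funext => b; rewrite mul1r.
exists (d @` B); split; first exact: effective_open_dom_image ga.1 geff oB.
  by exists x.
apply: ideal_unit_set_dom cB IB Bx _ => b /BO [Nb _].
exact: nu_N.
Qed.

Lemma ideal_scaled_indic W B k : ideal_unit_set W -> open W -> W !=set0 ->
  compact_open_slice g B -> I (fun x => k * \1_B x).
Proof.
move=> IW oW W0 cB.
have /choice [D D_nbhd] : forall y, exists D : set T,
    units g y -> [/\ open D, D y & ideal_unit_set D].
  move=> y; have [uy|nuy] := pselect (units g y); last by exists set0.
  by have [D ?] := ideal_unit_set_translate IW oW W0 uy; exists D.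
have rB_units y : (r @` B) y -> units g y by move=> [b _ <-]; apply: units_ran.
have crB : compact (r @` B).
  apply: continuous_compact cB.1.
  exact/continuous_subspaceT/ample_continuous_ran.
have [F F_rB rB_cover] : finite_subset_cover (r @` B) D (r @` B).
  apply: (compact_cover_compact crB) => [y /rB_units/D_nbhd [] //|y rBy].
  by exists y => //; have [] := D_nbhd y (rB_units y rBy).
have cover_unit_set : ideal_unit_set (\big[setU/set0]_(y <- finmap.enum_fset F) D y).
  rewrite big_seq; apply: big_ind; [exact: ideal_unit_set0|exact: ideal_unit_setU|].
  move=> y /F_rB; rewrite inE => /rB_units uy.
  by have [] := D_nbhd y uy.
apply: ideal_scaled_indic_ran cover_unit_set cB _.
by rewrite -bigcup_fset.
Qed.

Hypothesis gH : units_hausdorff g.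
Hypothesis supp_interior : forall f : T -> K, steinberg g f ->
  (exists x, f x != 0) -> interior [set x | f x != 0] !=set0.

Lemma ideal_nonvanishing_on_units f : I f -> (exists x, f x != 0) ->
  exists h W, [/\ I h, open W, W !=set0, W `<=` units g &
    forall u, W u -> h u != 0].
Proof.
move=> If f_neq0; have [x0 x0_int] := supp_interior (ideal_steinberg gI If) f_neq0.
have [B [cB Bx0 B_supp]] := ga.2 x0 _ (@open_interior _ _) x0_int.
have [_ sB] := cB; have [oB _ _] := sB.
have [nu_neq0 _ _ _] := gnu.
exists (conv (fun a => 1 * \1_(i @^-1` B) a) f), (d @` B); split.
- exact: (ideal_convl gI If (steinberg_scaled_indic 1 (compact_open_slice_inv ga cB))).
- exact: effective_open_dom_image ga.1 geff oB.
- by exists (d x0), x0.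
- by move=> _ [b _ <-]; apply: units_dom.
move=> _ [b Bb <-]; rewrite conv_indic_inv_dom // mulr1 mulf_neq0 //.
  by apply: nu_neq0; rewrite /G2 /composable /= gdom_inv.
exact: interior_subset (B_supp b Bb).
Qed.

Lemma ideal_unit_set_of_nonvanishing h W : I h -> open W -> W !=set0 ->
  W `<=` units g -> (forall u, W u -> h u != 0) ->
  exists V, [/\ open V, V !=set0 & ideal_unit_set V].
Proof.
move=> Ih oW W0 Wu h_neq0; have [s [s_slices h_sum]] := ideal_steinberg gI Ih.
have [W' [oW' [u W'u] W'W s_over]] :
    exists W', [/\ open W', W' !=set0, W' `<=` W &
      forall U, U \in [seq p.2 | p <- s] -> units_or_empty_over g W' U].
  apply: localize_slices => // _ /mapP [p ps ->].
  by have [] := s_slices p ps.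
have [V [cV Vu VW']] := ga.2 u W' oW' W'u.
have [_ [oV _ _]] := cV.
have Vunits : V `<=` units g := subset_trans VW' (subset_trans W'W Wu).
have h_red xi : V (r xi) -> V (d xi) -> h xi = h u * \1_(units g) xi.
  move=> Vr Vd; rewrite h_sum; apply: (sum_indic_over (W := W')) => //.
  - by move=> p ps; apply: s_over; apply: map_f.
  - exact: subset_trans W'W Wu.
  - exact: VW'.
  - exact: VW'.
have hu_neq0 : h u != 0 by apply: h_neq0; apply: W'W.
exists V; split => //; first by exists u.
split => //; rewrite -(conv_indic_sandwich Vunits hu_neq0 h_red).
apply: (ideal_convl gI); last exact: steinberg_scaled_indic.
exact: (ideal_convr gI Ih (steinberg_indic cV)).
Qed.

End Simplicity.

Theorem proposition4p7 (T : topologicalType) (g : groupoid_ops T)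
  (K : fieldType) (nu : T * T -> K) :
  ample g -> @second_countable T -> units_hausdorff g ->
  normalized_cocycle g nu ->
  effective g ->
  (forall f : T -> K, steinberg g f -> (exists x, f x != 0) ->
     interior [set x | f x != 0] !=set0) ->
  minimal g ->
  simple_algebra g nu.
Proof.
move=> ga _ gH gnu geff supp_interior gmin I gI.
have [[f [If f_neq0]]|I_zero] := pselect (exists f, I f /\ exists x, f x != 0).
  right; apply: (ideal_eq_steinberg gI) => B k cB.
  have [h [W [Ih oW W0 Wu h_neq0]]] :=
    ideal_nonvanishing_on_units ga geff gnu gI supp_interior If f_neq0.
  have [V [oV V0 IV]] :=
    ideal_unit_set_of_nonvanishing ga geff gnu gI gH Ih oW W0 Wu h_neq0.
  exact: (ideal_scaled_indic ga geff gnu gI gmin k IV oV V0 cB).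
left; apply/seteqP; split=> [f If|_ ->]; last exact: ideal0 gI.
apply/funext => x; apply: contrapT => /eqP f_neq0.
by apply: I_zero; exists f; split => //; exists x.
Qed.
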